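(* Every complex $3$-dimensional $(-1,1)$-superalgebra of type $(2,1)$ is associative.
   Context: All algebras are over $\mathbb{C}$. A superalgebra is a $\mathbb{Z}_2$-graded algebra $A=A_0\oplus A_1$ with $A_iA_j\subseteq A_{i+j \bmod 2}$; $|x|\in\{0,1\}$ is the degree of a homogeneous $x$. It has type $(n,m)$ if $\dim A_0=n$, $\dim A_1=m$. The associator is $(x,y,z)=(xy)z-x(yz)$; a superalgebra is associative if $(x,y,z)=0$ for all $x,y,z$. A superalgebra is right alternative if $(x,y,z)=-(-1)^{|y||z|}(x,z,y)$ for all homogeneous $x,y,z$. A $(-1,1)$-superalgebra is a right alternative superalgebra satisfying $(x,y,z)+(-1)^{|x||y|+|x||z|}(y,z,x)+(-1)^{|z||y|+|x||z|}(z,x,y)=0$ for all homogeneous $x,y,z$. *)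

From HB Require Import structures.
From mathcomp Require Import all_boot all_order all_algebra.
From mathcomp Require Import complex.
From mathcomp Require Import Rstruct.
Set Implicit Arguments. Unset Strict Implicit. Unset Printing Implicit Defensive.
Import Order.TTheory GRing.Theory Num.Theory.
Local Open Scope ring_scope.

Notation CC := (Rdefinitions.R)[i].

Section SuperAlg.
Variables (V : vectType CC) (A0 A1 : {vspace V}) (mul : V -> V -> V).

Definition hcomp (b : bool) : {vspace V} := if b then A1 else A0.

Definition psign (b c : bool) : CC := (-1) ^+ (b && c).

Definition bilinear_mul : Prop :=
  (forall (a : CC) (x y z : V), mul (a *: x + y) z = a *: mul x z + mul y z) /\
  (forall (a : CC) (x y z : V), mul z (a *: x + y) = a *: mul z x + mul z y).

Definition is_superalgebra_of_type (n m : nat) : Prop :=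
  [/\ bilinear_mul,
      (A0 + A1 = fullv)%VS,
      (A0 :&: A1 = 0)%VS,
      (\dim A0 = n /\ \dim A1 = m) &
      forall (i j : bool) (x y : V), x \in hcomp i -> y \in hcomp j ->
        mul x y \in hcomp (i (+) j)].

Definition assoc (x y z : V) : V := mul (mul x y) z - mul x (mul y z).

Definition is_associative : Prop := forall x y z : V, assoc x y z = 0.

Definition is_right_alternative : Prop :=
  forall (bx by_ bz : bool) (x y z : V),
    x \in hcomp bx -> y \in hcomp by_ -> z \in hcomp bz ->
    assoc x y z = - (psign by_ bz *: assoc x z y).

Definition is_m11_superalgebra : Prop :=
  is_right_alternative /\
  forall (bx by_ bz : bool) (x y z : V),
    x \in hcomp bx -> y \in hcomp by_ -> z \in hcomp bz ->
    assoc x y z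
    + (psign bx by_ * psign bx bz) *: assoc y z x
    + (psign bz by_ * psign bx bz) *: assoc z x y = 0.

End SuperAlg.

From HB Require Import structures.
From mathcomp Require Import all_boot all_order all_algebra.
From mathcomp Require Import complex Rstruct.
From mathcomp Require Import ring.
Set Implicit Arguments. Unset Strict Implicit. Unset Printing Implicit Defensive.
Import GRing.Theory Num.Theory.
Local Open Scope ring_scope.

(* The even part A0 is a right alternative plane. For fixed a the associator
   (a, y, z) is alternating in y, z, hence equal to det(y, z) w for a single w,
   and its trace in y is det(w, z); but that trace vanishes for every z because
   tr(R_z L_a) = tr(L_a R_z).  So w = 0 and A0 is associative.
   The odd part is a line spanned by f, with a f = k f and f a = k' f for a in
   A0.  Right alternativity and the (-1,1)-identity give (f f) a = k f f and
   a (f f) = (3k - 2k') f f; as a a has scalars k^2 and k'^2, comparing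
   (a a)(f f) with a (a (f f)) yields 6 (k - k')^2 f f = 0, and every
   associator involving f is a multiple of (k - k') f f or of
   3 (f, f, f) = 0. *)

Lemma sum_ord2 (M : nmodType) (F : 'I_2 -> M) :
  \sum_(i < 2) F i = F ord0 + F ord_max.
Proof. by rewrite big_ord_recl big_ord1; congr (_ + F _); apply: val_inj. Qed.

Section CoordTrace.
Variables (K : fieldType) (V : vectType K).

Definition coord_trace n (X : n.-tuple V) (h : V -> V) : K :=
  \sum_i coord X i (h X`_i).

Lemma coord_traceB n (X : n.-tuple V) (g h : V -> V) :
  coord_trace X (fun v => g v - h v) = coord_trace X g - coord_trace X h.
Proof. by rewrite -sumrB; apply: eq_bigr => i _; rewrite linearB. Qed.

Lemma mem_span_nth n (X : n.-tuple V) (i : 'I_n) : X`_i \in <<X>>%VS.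
Proof. by rewrite -(tnth_nth 0) memv_span ?mem_tnth. Qed.

Lemma coord_trace_comm n (X : n.-tuple V) (g h : {linear V -> V}) :
    {homo g : v / v \in <<X>>%VS} -> {homo h : v / v \in <<X>>%VS} ->
  coord_trace X (g \o h) = coord_trace X (h \o g).
Proof.
have expand (g' h' : {linear V -> V}) : {homo h' : v / v \in <<X>>%VS} ->
    coord_trace X (g' \o h') =
    \sum_(i < n) \sum_(j < n) coord X j (h' X`_i) * coord X i (g' X`_j).
  move=> h'X; apply: eq_bigr => i _ /=.
  rewrite {1}(coord_span (h'X _ (mem_span_nth X i))) !linear_sum /=.
  by apply: eq_bigr => j _; rewrite !linearZ.
move=> gX hX; rewrite !expand // exchange_big /=.
by apply: eq_bigr => i _; apply: eq_bigr => j _; rewrite mulrC.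
Qed.

End CoordTrace.

Lemma psignFl b : psign false b = 1.
Proof. by []. Qed.

Lemma psignFr b : psign b false = 1.
Proof. by rewrite /psign andbF. Qed.

Lemma psignTT : psign true true = -1.
Proof. by rewrite /psign expr1. Qed.

Lemma self_opp_eq0 (R : numFieldType) (V : lmodType R) (v : V) : v = - v -> v = 0.
Proof.
move/eqP; rewrite -subr_eq0 opprK -mulr2n -scaler_nat scaler_eq0 pnatr_eq0 /=.
by move/eqP.
Qed.

Lemma dimv1_line (K : fieldType) (V : vectType K) (U : {vspace V}) :
  \dim U = 1%N -> exists v, U = <[v]>%VS.
Proof.
move=> dimU; have := vbasisP U; move: (vbasis U); rewrite dimU.
by case=> -[|v []] //= _ /andP[/eqP <- _]; exists v; rewrite span_seq1.
Qed.

Definition homogeneous (K : fieldType) (V : vectType K) (A0 A1 : {vspace V}) (x : V) :=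
  (x \in A0) || (x \in A1).

Section Bilinear.
Variables (V : vectType CC) (mul : V -> V -> V).
Hypothesis mulP : bilinear_mul mul.

Definition lmult a : {linear V -> V} :=
  HB.pack (mul a) (GRing.isLinear.Build _ _ _ _ (mul a) (fun k x y => mulP.2 k x y a)).
Definition rmult z : {linear V -> V} :=
  HB.pack (mul^~ z) (GRing.isLinear.Build _ _ _ _ (mul^~ z) (fun k x y => mulP.1 k x y z)).

Lemma mulDl x y z : mul (x + y) z = mul x z + mul y z.
Proof. exact: (linearD (rmult z)). Qed.
Lemma mulDr x y z : mul z (x + y) = mul z x + mul z y.
Proof. exact: (linearD (lmult z)). Qed.
Lemma mulZl k x z : mul (k *: x) z = k *: mul x z.
Proof. exact: (linearZ_LR (rmult z)). Qed.
Lemma mulZr k x z : mul z (k *: x) = k *: mul z x.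
Proof. exact: (linearZ_LR (lmult z)). Qed.

Local Notation assoc := (assoc mul).

Lemma assocDl x x' y z : assoc (x + x') y z = assoc x y z + assoc x' y z.
Proof. by rewrite /assoc !mulDl opprD addrACA. Qed.
Lemma assocDm x y y' z : assoc x (y + y') z = assoc x y z + assoc x y' z.
Proof. by rewrite /assoc mulDr mulDl mulDl mulDr opprD addrACA. Qed.
Lemma assocDr x y z z' : assoc x y (z + z') = assoc x y z + assoc x y z'.
Proof. by rewrite /assoc !mulDr opprD addrACA. Qed.
Lemma assocZl k x y z : assoc (k *: x) y z = k *: assoc x y z.
Proof. by rewrite /assoc !mulZl scalerBr. Qed.
Lemma assocZm k x y z : assoc x (k *: y) z = k *: assoc x y z.
Proof. by rewrite /assoc mulZr mulZl mulZl mulZr scalerBr. Qed.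
Lemma assocZr k x y z : assoc x y (k *: z) = k *: assoc x y z.
Proof. by rewrite /assoc !mulZr scalerBr. Qed.

Lemma right_alternative_dim2_assoc (X : 2.-tuple V) :
    {in <<X>>%VS &, forall x y, mul x y \in <<X>>%VS} ->
    {in <<X>>%VS & &, forall x y z, assoc x y z = - assoc x z y} ->
  {in <<X>>%VS & &, forall x y z, assoc x y z = 0}.
Proof.
move=> mulX alt x y z Hx Hy Hz.
have alt0 v : v \in <<X>>%VS -> assoc x v v = 0.
  by move=> Hv; apply: self_opp_eq0; apply: alt.
have trace0 w : w \in <<X>>%VS -> coord_trace X (fun v => assoc x v w) = 0.
  move=> Hw; rewrite coord_traceB.
  have Rw : {homo rmult w : v / v \in <<X>>%VS} by move=> v Hv; apply: mulX.
  have Lx : {homo lmult x : v / v \in <<X>>%VS} by move=> v Hv; apply: mulX.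
  by have /= -> := coord_trace_comm Rw Lx; rewrite subrr.
have trace2 h : coord_trace X h = coord X ord0 (h X`_0) + coord X ord_max (h X`_1).
  by rewrite /coord_trace sum_ord2.
have He1 : X`_0 \in <<X>>%VS := mem_span_nth X ord0.
have He2 : X`_1 \in <<X>>%VS := mem_span_nth X ord_max.
have e12 : assoc x X`_0 X`_1 = 0.
  have c0 : coord X ord0 (assoc x X`_0 X`_1) = 0.
    by have := trace0 _ He2; rewrite trace2 alt0 // raddf0 addr0.
  have c1 : coord X ord_max (assoc x X`_0 X`_1) = 0.
    have := trace0 _ He1; rewrite trace2 alt0 // raddf0 add0r alt // raddfN.
    by move/eqP; rewrite oppr_eq0 => /eqP.
  have inX : assoc x X`_0 X`_1 \in <<X>>%VS by rewrite rpredB ?mulX.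
  by rewrite (coord_span inX) sum_ord2 c0 c1 !scale0r addr0.
rewrite (coord_span Hy) (coord_span Hz) !sum_ord2.
rewrite !(assocDm, assocDr, assocZm, assocZr) !alt0 // (alt x X`_1) // e12.
by rewrite oppr0 !scaler0 !addr0.
Qed.

Lemma assoc_eq0_homogeneous (A0 A1 : {vspace V}) :
    (A0 + A1 = fullv)%VS ->
    (forall x y z, homogeneous A0 A1 x -> homogeneous A0 A1 y ->
       homogeneous A0 A1 z -> assoc x y z = 0) ->
  is_associative mul.
Proof.
move=> sumA hom x y z.
have dec v : exists v0 v1, [/\ v = v0 + v1, homogeneous A0 A1 v0 & homogeneous A0 A1 v1].
  have : v \in (A0 + A1)%VS by rewrite sumA memvf.
  by case/memv_addP=> v0 Hv0 [v1 Hv1 ->]; exists v0, v1; rewrite /homogeneous Hv0 Hv1 orbT.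
have [x0 [x1 [-> ? ?]]] := dec x.
have [y0 [y1 [-> ? ?]]] := dec y.
have [z0 [z1 [-> ? ?]]] := dec z.
by rewrite !(assocDl, assocDm, assocDr) !hom // !addr0.
Qed.

End Bilinear.

Section OddLine.
Variables (V : vectType CC) (A0 A1 : {vspace V}) (mul : V -> V -> V) (f : V).
Hypotheses (mulP : bilinear_mul mul)
  (mul_graded : forall (i j : bool) (x y : V), x \in hcomp A0 A1 i ->
     y \in hcomp A0 A1 j -> mul x y \in hcomp A0 A1 (i (+) j))
  (A1f : A1 = <[f]>%VS)
  (m11 : is_m11_superalgebra A0 A1 mul)
  (assoc_even : {in A0 & &, forall a b c, assoc mul a b c = 0}).

Local Notation assoc := (assoc mul).

Let mulZl := mulZl mulP.
Let mulZr := mulZr mulP.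
Let f_odd : f \in A1. Proof. by rewrite A1f memv_line. Qed.

Lemma mul_even_odd a : a \in A0 -> exists k, mul a f = k *: f.
Proof. by move=> Ha; apply/vlineP; rewrite -A1f (@mul_graded false true). Qed.

Lemma mul_odd_even a : a \in A0 -> exists k, mul f a = k *: f.
Proof. by move=> Ha; apply/vlineP; rewrite -A1f (@mul_graded true false). Qed.

Lemma mul_odd_odd : mul f f \in A0.
Proof. exact: (@mul_graded true true). Qed.

Lemma assoc_even_odd_even a b : a \in A0 -> b \in A0 -> assoc a f b = 0.
Proof.
move=> Ha Hb; have [k hk] := mul_even_odd Ha; have [k' hk'] := mul_odd_even Hb.
by rewrite /assoc hk hk' mulZl mulZr hk hk' !scalerA mulrC subrr.
Qed.

Lemma assoc_even_even_odd a b : a \in A0 -> b \in A0 -> assoc a b f = 0.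
Proof.
move=> Ha Hb; have := m11.1 false false true a b f Ha Hb f_odd.
by rewrite assoc_even_odd_even // scaler0 oppr0.
Qed.

Lemma assoc_odd_even_even a b : a \in A0 -> b \in A0 -> assoc f a b = 0.
Proof.
move=> Ha Hb; have := m11.2 true false false f a b f_odd Ha Hb.
by rewrite assoc_even_even_odd // assoc_even_odd_even // !scaler0 !addr0.
Qed.

Section EvenScalars.
Variables (b : V) (k k' : CC).
Hypotheses (Hb : b \in A0) (hk : mul b f = k *: f) (hk' : mul f b = k' *: f).

Lemma mul_odd_sq_even : mul (mul f f) b = k *: mul f f.
Proof.
have := m11.1 true true false f f b f_odd f_odd Hb.
rewrite /assoc hk hk' mulZl !mulZr psignFr scale1r opprB.
by move/(canRL (subrK _)); rewrite subrK.
Qed.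

Lemma mul_even_odd_sq : mul b (mul f f) = (3 * k - 2 * k') *: mul f f.
Proof.
have := m11.2 true true false f f b f_odd f_odd Hb.
rewrite /assoc mul_odd_sq_even hk hk' !mulZl !mulZr psignTT psignFr psignFl.
rewrite mulN1r mulr1 scaleN1r scale1r => /eqP; rewrite addrA subr_eq0 => /eqP <-.
by rewrite -!scalerBl -scalerDl; congr (_ *: _); ring.
Qed.

End EvenScalars.

Lemma scale_sub_odd_sq_eq0 a k k' :
  a \in A0 -> mul a f = k *: f -> mul f a = k' *: f -> (k - k') *: mul f f = 0.
Proof.
move=> Ha hk hk'.
have Haa : mul a a \in A0 := @mul_graded false false a a Ha Ha.
have hkk : mul (mul a a) f = (k * k) *: f.
  move/eqP: (assoc_even_even_odd Ha Ha); rewrite subr_eq0 => /eqP ->.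
  by rewrite hk mulZr hk scalerA.
have hk'k' : mul f (mul a a) = (k' * k') *: f.
  move/eqP: (assoc_odd_even_even Ha Ha); rewrite subr_eq0 => /eqP <-.
  by rewrite hk' mulZl hk' scalerA.
have := assoc_even Ha Ha mul_odd_odd.
rewrite /assoc (mul_even_odd_sq Haa hkk hk'k') (mul_even_odd_sq Ha hk hk') mulZr.
rewrite (mul_even_odd_sq Ha hk hk') scalerA -scalerBl => /eqP.
rewrite scaler_eq0 => /orP[|/eqP ->]; last by rewrite scaler0.
have -> : 3 * (k * k) - 2 * (k' * k') - (3 * k - 2 * k') * (3 * k - 2 * k') =
          - 6 * (k - k') ^+ 2 by ring.
by rewrite mulf_eq0 oppr_eq0 pnatr_eq0 expf_eq0 /= => /eqP ->; rewrite scale0r.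
Qed.

Lemma assoc_odd_odd_even a : a \in A0 -> assoc f f a = 0.
Proof.
move=> Ha; have [k hk] := mul_even_odd Ha; have [k' hk'] := mul_odd_even Ha.
by rewrite /assoc (mul_odd_sq_even Ha hk hk') hk' mulZr -scalerBl (scale_sub_odd_sq_eq0 Ha hk hk').
Qed.

Lemma assoc_odd_even_odd a : a \in A0 -> assoc f a f = 0.
Proof.
move=> Ha; have [k hk] := mul_even_odd Ha; have [k' hk'] := mul_odd_even Ha.
rewrite /assoc hk hk' mulZl mulZr -scalerBl -opprB scaleNr.
by rewrite (scale_sub_odd_sq_eq0 Ha hk hk') oppr0.
Qed.

Lemma assoc_even_odd_odd a : a \in A0 -> assoc a f f = 0.
Proof.
move=> Ha; have [k hk] := mul_even_odd Ha; have [k' hk'] := mul_odd_even Ha.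
rewrite /assoc hk mulZl (mul_even_odd_sq Ha hk hk') -scalerBl.
have -> : k - (3 * k - 2 * k') = - 2 * (k - k') by ring.
by rewrite -scalerA (scale_sub_odd_sq_eq0 Ha hk hk') scaler0.
Qed.

Lemma assoc_odd_odd_odd : assoc f f f = 0.
Proof.
have := m11.2 true true true f f f f_odd f_odd f_odd.
rewrite psignTT mulrNN mulr1 scale1r -mulr2n -mulrSr -scaler_nat.
by move/eqP; rewrite scaler_eq0 pnatr_eq0 => /eqP.
Qed.

Lemma assoc_homogeneous x y z :
    homogeneous A0 A1 x -> homogeneous A0 A1 y -> homogeneous A0 A1 z ->
  assoc x y z = 0.
Proof.
have odd v : v \in A1 -> exists c, v = c *: f by rewrite A1f => /vlineP.
move=> /orP[hx|/odd[kx ->]] /orP[hy|/odd[ky ->]] /orP[hz|/odd[kz ->]];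
  rewrite ?(assocZl mulP, assocZm mulP, assocZr mulP).
- exact: assoc_even.
- by rewrite assoc_even_even_odd ?scaler0.
- by rewrite assoc_even_odd_even ?scaler0.
- by rewrite assoc_even_odd_odd ?scaler0.
- by rewrite assoc_odd_even_even ?scaler0.
- by rewrite assoc_odd_even_odd ?scaler0.
- by rewrite assoc_odd_odd_even ?scaler0.
- by rewrite assoc_odd_odd_odd !scaler0.
Qed.

End OddLine.

Theorem mainTheorem18 (V : vectType CC) (A0 A1 : {vspace V}) (mul : V -> V -> V) :
  \dim {: V} = 3%N ->
  is_superalgebra_of_type A0 A1 mul 2 1 ->
  is_m11_superalgebra A0 A1 mul ->
  is_associative mul.
Proof.
move=> _ [mulP sumA _ [dimA0 dimA1] mul_graded] m11.
have [f A1f] := dimv1_line dimA1.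
have assoc_even : {in A0 & &, forall a b c, assoc mul a b c = 0}.
  have := vbasisP A0; move: (vbasis A0); rewrite dimA0 => X /andP[/eqP defA0 _].
  rewrite -defA0; apply: (right_alternative_dim2_assoc mulP).
    by move=> a b; rewrite defA0; apply: (mul_graded false false).
  move=> a b c; rewrite defA0 => Ha Hb Hc.
  by rewrite (m11.1 false false false) // psignFl scale1r.
apply: (assoc_eq0_homogeneous mulP sumA) => x y z.
exact: (assoc_homogeneous mulP mul_graded A1f m11 assoc_even).
Qed.
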